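(* In the random coefficients perturbed utility model described in the context, let the average structural function factor as in the context (so that $\overline{Y}(x,\beta)$ is defined) and let Assumption 2 hold. Assume $\beta_{k,1}=1$ almost surely (under $\nu$) for each $k\in\{1,\dots,K\}$. For each $k$ let $-\infty\le\underline{x}_{k,1}\le\overline{x}_{k,1}\le\infty$, and suppose $\overline{Y}(x)$ is identified (known) for all $x=(x_1',\dots,x_K')'$ satisfying $x_{k,1}\in[\underline{x}_{k,1},\overline{x}_{k,1}]$ for each $k$ and $x_{k,j}=0$ for all $j>1$. Then differences $V(u)-V(u')$ are identified for all $u,u'\in\times_{k=1}^K[\underline{x}_{k,1},\overline{x}_{k,1}]$. In particular, if $\underline{x}_{k,1}=-\infty$ and $\overline{x}_{k,1}=\infty$ for each $k$, then $V$ is identified up to an additive constant.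
   Context: Model. There are $K$ goods. For each good $k\in\{1,\dots,K\}$ there is a covariate vector $x_k=(x_{k,1},\dots,x_{k,d_k})'\in\mathbb{R}^{d_k}$ and a random coefficient vector $\beta_k=(\beta_{k,1},\dots,\beta_{k,d_k})'\in\mathbb{R}^{d_k}$; write $x=(x_1',\dots,x_K')'$ and $\beta=(\beta_1',\dots,\beta_K')'$. Let $\varepsilon$ be an unobservable of unrestricted dimension in a measurable space $E$, $B\subseteq\mathbb{R}^K$ a feasibility set and $D:B\times E\to\mathbb{R}\cup\{-\infty\}$ a disturbance. Choices satisfy $Y(x,\beta,\varepsilon)\in\arg\max_{y\in B}\sum_{k=1}^K y_k(\beta_k'x_k)+D(y,\varepsilon)$ (argmax nonempty). The average structural function is $\overline{Y}(x)=\int Y(x,\beta,\varepsilon)\,d\tau(\beta,\varepsilon)$, where $\tau=\nu\otimes\mu$ is a product of a probability measure $\nu$ over $\beta$ and a probability measure $\mu$ over $\varepsilon$ (slope–intercept independence), not depending on $x$, and $\overline{Y}(x)$ is finite. Define $\overline{Y}(x,\beta)=\int Y(x,\beta,\varepsilon)\,d\mu(\varepsilon)$, so $\overline{Y}(x)=\int\overline{Y}(x,\beta)\,d\nu(\beta)$. Let $\overline{B}$ be the convex hull of $B$ and $\overline{D}(y)=\sup\{\int D(\tilde Y(\varepsilon),\varepsilon)\,d\mu(\varepsilon):\tilde Y:E\to B\text{ measurable},\ \int\tilde Y\,d\mu=y\}$ ($\sup\emptyset=-\infty$). Assumption 2: (i) $\overline{Y}(x,\beta)$ equals (is the unique element of)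 $\arg\max_{y\in\overline{B}}\sum_k y_k(\beta_k'x_k)+\overline{D}(y)$; (ii) $\overline{B}$ is nonempty, closed, convex; (iii) $\overline{D}:\mathbb{R}^K\to\mathbb{R}\cup\{-\infty\}$ is concave, upper semicontinuous, finite at some $y\in\overline{B}$. Define the integrated indirect utility $V(u)=\max_{y\in\overline{B}}\sum_k y_ku_k+\overline{D}(y)$ for $u\in\mathbb{R}^K$. Identification: a quantity is identified if it is uniquely determined by the known values of $\overline{Y}$ on the stated region, i.e. all specifications satisfying the hypotheses and generating the same $\overline{Y}$ there yield the same value. *)

From HB Require Import structures.
From mathcomp Require Import all_boot all_order all_algebra.
From mathcomp Require Import all_classical all_reals all_analysis.
Set Implicit Arguments. Unset Strict Implicit. Unset Printing Implicit Defensive.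
Import Order.TTheory GRing.Theory Num.Theory.
Local Open Scope classical_set_scope.
Local Open Scope ring_scope.

(* Good k has (d k).+1 covariates / coefficients; coordinate "1" of the paper
   is the index ord0.  A covariate (or coefficient) configuration is a family
   indexed by goods. *)
Definition coef (R : realType) (K : nat) (d : 'I_K -> nat) :=
  forall k : 'I_K, 'I_(d k).+1 -> R.

Definition index_k (R : realType) K (d : 'I_K -> nat) (b x : coef R d) (k : 'I_K) : R :=
  \sum_(j < (d k).+1) b k j * x k j.

Definition dotv (R : realType) K (y u : 'rV[R]_K) : R := \sum_(k < K) y ord0 k * u ord0 k.

Definition argmax_on (T : Type) (R : realType) (A : set T) (f : T -> \bar R) : set T :=
  [set y | A y /\ forall z, A z -> (f z <= f y)%E].

Definition conv_hull (R : realType) K (B : set 'rV[R]_K) : set 'rV[R]_K :=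
  [set y | exists n (w : 'I_n -> R) (p : 'I_n -> 'rV[R]_K),
     (forall i, 0 <= w i) /\ \sum_(i < n) w i = 1 /\ (forall i, B (p i)) /\
     y = \sum_(i < n) w i *: p i].

Unset Implicit Arguments.
Record spec (R : realType) (K : nat) (d : 'I_K -> nat) := Spec {
  sp_dE : measure_display;
  sp_E : measurableType sp_dE;              (* space of epsilon *)
  sp_mu : probability sp_E R;
  sp_dT : measure_display;
  sp_T : measurableType sp_dT;
  sp_nu : probability sp_T R;
  sp_beta : sp_T -> coef R d;               (* beta; nu = law of sp_beta *)
  sp_B : set 'rV[R]_K;
  sp_D : 'rV[R]_K -> sp_E -> \bar R;
  sp_Y : coef R d -> coef R d -> sp_E -> 'rV[R]_K  (* Y(x, beta, eps) *)
}.
Set Implicit Arguments.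
Arguments sp_dE {R K d}. Arguments sp_E {R K d}. Arguments sp_mu {R K d}.
Arguments sp_dT {R K d}. Arguments sp_T {R K d}. Arguments sp_nu {R K d}.
Arguments sp_beta {R K d}. Arguments sp_B {R K d}. Arguments sp_D {R K d}.
Arguments sp_Y {R K d}.

Section SpecDefs.
Variables (R : realType) (K : nat) (d : 'I_K -> nat) (S : @spec R K d).

Definition Bbar : set 'rV[R]_K := conv_hull (sp_B S).

Definition utility (x b : coef R d) (e : sp_E S) (y : 'rV[R]_K) : \bar R :=
  ((\sum_(k < K) y ord0 k * index_k b x k)%:E + sp_D S y e)%E.

Definition Ybar_xb (x b : coef R d) : 'rV[R]_K :=
  \row_(k < K) fine (\int[sp_mu S]_e ((sp_Y S x b e) ord0 k)%:E)%E.

Definition ASF (x : coef R d) : 'rV[R]_K :=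
  \row_(k < K) fine (\int[sp_nu S]_t ((Ybar_xb x (sp_beta S t)) ord0 k)%:E)%E.

Definition Dbar (y : 'rV[R]_K) : \bar R :=
  ereal_sup [set (\int[sp_mu S]_e sp_D S (Yt e) e)%E | Yt in
    [set Yt : sp_E S -> 'rV[R]_K |
       (forall e, sp_B S (Yt e)) /\
       (forall k, measurable_fun setT (fun e => Yt e ord0 k)) /\
       (forall k, (sp_mu S).-integrable setT (fun e => (Yt e ord0 k)%:E)) /\
       (forall k, (\int[sp_mu S]_e (Yt e ord0 k)%:E)%E = (y ord0 k)%:E)]].

Definition Vfun (u : 'rV[R]_K) : \bar R :=
  ereal_sup [set ((dotv y u)%:E + Dbar y)%E | y in Bbar].

Definition near_vec (y : 'rV[R]_K) (P : 'rV[R]_K -> Prop) :=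
  exists2 eps : R, 0 < eps & forall z : 'rV[R]_K, (forall k, `|z ord0 k - y ord0 k| < eps) -> P z.

Definition admissible : Prop :=
  (forall (y : 'rV[R]_K) e, sp_D S y e != +oo%E) /\
  (forall x b e, argmax_on (sp_B S) (utility x b e) (sp_Y S x b e)) /\
  (forall x b k, (sp_mu S).-integrable setT (fun e => ((sp_Y S x b e) ord0 k)%:E)) /\
  (forall x k, (sp_nu S).-integrable setT
                 (fun t => ((Ybar_xb x (sp_beta S t)) ord0 k)%:E)) /\
  (forall x b, argmax_on Bbar (fun y : 'rV[R]_K => ((\sum_(k < K) y ord0 k * index_k b x k)%:E
                                          + Dbar y)%E)
               = [set Ybar_xb x b]) /\
  (* Assumption 2 (ii): Bbar nonempty, closed, convex *)
  Bbar !=set0 /\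
  (forall y : 'rV[R]_K, (forall eps : R, 0 < eps -> exists z : 'rV[R]_K, Bbar z /\
                 forall k, `|z ord0 k - y ord0 k| < eps) -> Bbar y) /\
  (forall (y z : 'rV[R]_K) (t : R), Bbar y -> Bbar z -> 0 <= t <= 1 ->
                 Bbar (t *: y + (1 - t) *: z)) /\
  (* Assumption 2 (iii): Dbar concave, usc, finite somewhere on Bbar, never +oo *)
  (forall y : 'rV[R]_K, Dbar y != +oo%E) /\
  (forall (y z : 'rV[R]_K) (t : R), 0 <= t <= 1 ->
      (t%:E * Dbar y + (1 - t)%:E * Dbar z <= Dbar (t *: y + (1 - t) *: z))%E) /\
  (forall (y : 'rV[R]_K) (r : R), (Dbar y < r%:E)%E -> near_vec y (fun z => (Dbar z < r%:E)%E)) /\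
  (exists y : 'rV[R]_K, Bbar y /\ Dbar y \is a fin_num) /\
  {ae sp_nu S, forall t, forall k, sp_beta S t k ord0 = 1}.

End SpecDefs.

Definition in_region (R : realType) K (d : 'I_K -> nat) (lo hi : 'I_K -> \bar R)
    (x : coef R d) : Prop :=
  forall k, (lo k <= (x k ord0)%:E <= hi k)%E /\ (forall j, j != ord0 -> x k j = 0).

Definition in_box (R : realType) K (lo hi : 'I_K -> \bar R) (u : 'rV[R]_K) : Prop :=
  forall k, (lo k <= (u ord0 k)%:E <= hi k)%E.

From HB Require Import structures.
From mathcomp Require Import all_boot all_order all_algebra.
From mathcomp Require Import all_classical all_reals all_analysis.
From mathcomp Require Import lra.

(* Put x_{k,1} = u_k and x_{k,j} = 0 for j > 1.  When beta_{k,1} = 1 the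
   indices beta_k' x_k are exactly u, so by Assumption 2(i) the ASF at this x is
   the unique maximiser y*(u) of y.u + Dbar(y) over Bbar, and it is identified.
   V(u) is attained at y*(u), so V is finite and y*(u) is a subgradient of V at
   u.  On a segment u + t w the functions t |-> V(u + t w) of any two admissible
   specifications therefore share the (nondecreasing) subgradient
   g(t) = y*(u + t w).w.  On a grid of mesh 1/n their increments differ by at
   most (g(1) - g(0))/n, hence they are equal. *)

Set Implicit Arguments.
Unset Strict Implicit.
Unset Printing Implicit Defensive.
Import Order.TTheory GRing.Theory Num.Theory.
Local Open Scope classical_set_scope.
Local Open Scope ring_scope.

Lemma le0_if_le_divSn (R : archiRealFieldType) (x c : R) :
  (forall n : nat, x <= c / n.+1%:R) -> x <= 0.
Proof.
move=> xle; rewrite leNgt; apply/negP => x_gt0.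
have c_ge0 : 0 <= c by have := xle 0%N; rewrite divr1 => /(le_trans (ltW x_gt0)).
have := archi_boundP (divr_ge0 c_ge0 (ltW x_gt0)); set n := Num.Def.archi_bound _.
rewrite ltr_pdivrMr // => c_lt.
have := xle n; rewrite ler_pdivlMr ?ltr0n // => le_c.
have : x * n%:R < x * n.+1%:R by rewrite ltr_pM2l // ltr_nat.
lra.
Qed.

Section CommonSubgradient.
Variables (R : archiRealFieldType) (phi1 phi2 g : R -> R).
Hypothesis subgrad1 : forall s t, 0 <= s <= 1 -> 0 <= t <= 1 ->
  g t * (s - t) <= phi1 s - phi1 t.
Hypothesis subgrad2 : forall s t, 0 <= s <= 1 -> 0 <= t <= 1 ->
  g t * (s - t) <= phi2 s - phi2 t.

Let gap a b := (phi1 b - phi1 a) - (phi2 b - phi2 a).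

Lemma gap_le a b : 0 <= a <= 1 -> 0 <= b <= 1 ->
  `|gap a b| <= (g b - g a) * (b - a).
Proof.
move=> a01 b01; have h1 := subgrad1 b01 a01; have h1' := subgrad1 a01 b01.
have h2 := subgrad2 b01 a01; have h2' := subgrad2 a01 b01.
rewrite /gap ler_norml; apply/andP; split; nra.
Qed.

Lemma gap_le_telescoped n m : (m <= n.+1)%N ->
  `|gap 0 (m%:R / n.+1%:R)| <= (g (m%:R / n.+1%:R) - g 0) / n.+1%:R.
Proof.
have grid01 k : (k <= n.+1)%N -> 0 <= (k%:R / n.+1%:R : R) <= 1.
  by move=> kn; rewrite divr_ge0 //= ler_pdivrMr ?ltr0n // mul1r ler_nat.
elim: m => [|m IH] lemn; first by rewrite mul0r /gap !subrr normr0 mul0r.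
have := IH (ltnW lemn); have := gap_le (grid01 _ (ltnW lemn)) (grid01 _ lemn).
have -> : m.+1%:R / n.+1%:R - m%:R / n.+1%:R = n.+1%:R^-1 :> R.
  by rewrite -mulrBl -natrB // subSnn mul1r.
rewrite /gap; set a := m%:R / _; set b := m.+1%:R / _.
rewrite !ler_norml => /andP[l1 l2] /andP[l3 l4].
(* Folding c makes both syntactic instances of n.+1%:R^-1 one lra atom. *)
set c := n.+1%:R^-1 in l1 l2 l3 l4 *; apply/andP; split; lra.
Qed.

Lemma common_subgradient_increment_eq : phi1 1 - phi1 0 = phi2 1 - phi2 0.
Proof.
apply/eqP; rewrite -subr_eq0 -normr_le0.
apply: (@le0_if_le_divSn _ _ (g 1 - g 0)) => n.
by have := gap_le_telescoped (leqnn n.+1); rewrite divff ?pnatr_eq0.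
Qed.

End CommonSubgradient.

Lemma min_le_segment_le_max (R : realDomainType) (a b t : R) : 0 <= t <= 1 ->
  Num.min a b <= a + t * (b - a) <= Num.max a b.
Proof. by case/andP=> t0 t1; case: (leP a b) => ab; apply/andP; split; nra. Qed.

Lemma in_box_segment (R : realType) K (lo hi : 'I_K -> \bar R) (u u' : 'rV[R]_K) t :
  in_box lo hi u -> in_box lo hi u' -> 0 <= t <= 1 -> in_box lo hi (u + t *: (u' - u)).
Proof.
move=> box_u box_u' t01 k; rewrite !mxE.
have /andP[lo_u hi_u] := box_u k; have /andP[lo_u' hi_u'] := box_u' k.
have /andP[min_le le_max] := min_le_segment_le_max (u ord0 k) (u' ord0 k) t01.
apply/andP; split.
- by apply: (le_trans _ (lee_tofin min_le)); rewrite EFin_min le_min lo_u lo_u'.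
- by apply: le_trans (lee_tofin le_max) _; rewrite EFin_max ge_max hi_u hi_u'.
Qed.

Section Dotv.
Variables (R : realType) (K : nat).

Lemma dotvBr (y u v : 'rV[R]_K) : dotv y (u - v) = dotv y u - dotv y v.
Proof. by rewrite /dotv -sumrB; apply: eq_bigr => k _; rewrite !mxE mulrBr. Qed.

Lemma dotvZr (y w : 'rV[R]_K) a : dotv y (a *: w) = a * dotv y w.
Proof. by rewrite /dotv mulr_sumr; apply: eq_bigr => k _; rewrite mxE mulrCA. Qed.

End Dotv.

Section Demand.
Variables (R : realType) (K : nat) (d : 'I_K -> nat).

Definition covariates_at (u : 'rV[R]_K) : coef R d :=
  fun k j => if j == ord0 then u ord0 k else 0.

Definition coef_one : coef R d := fun _ _ => 1.

Lemma index_k_covariates_at (b : coef R d) u k :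
  b k ord0 = 1 -> index_k b (covariates_at u) k = u ord0 k.
Proof.
rewrite /index_k big_ord_recl /covariates_at eqxx => ->.
rewrite mul1r big1 ?addr0 // => j _.
by rewrite eq_sym (negbTE (neq_lift _ _)) mulr0.
Qed.

Lemma in_region_covariates_at (lo hi : 'I_K -> \bar R) u :
  in_box lo hi u -> in_region lo hi (covariates_at u).
Proof.
move=> box_u k; split; first by rewrite /covariates_at eqxx; exact: box_u.
by move=> j /negbTE j_neq0; rewrite /covariates_at j_neq0.
Qed.

Variable S : @spec R K d.

Lemma objective_covariates_at (b : coef R d) u : (forall k, b k ord0 = 1) ->
  (fun y : 'rV[R]_K => ((\sum_(k < K) y ord0 k * index_k b (covariates_at u) k)%:E + Dbar S y)%E)
  = (fun y => ((dotv y u)%:E + Dbar S y)%E).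
Proof.
move=> b1; apply: funext => y; congr (_%:E + _)%E.
by apply: eq_bigr => k _; rewrite index_k_covariates_at.
Qed.

(* By objective_covariates_at, any beta with beta_{k,1} = 1 would do here. *)
Definition demand u := Ybar_xb S (covariates_at u) coef_one.

Definition value u := dotv (demand u) u + fine (Dbar S (demand u)).

Hypothesis admissible_S : admissible S.

Lemma argmax_demand u :
  argmax_on (Bbar S) (fun y => ((dotv y u)%:E + Dbar S y)%E) = [set demand u].
Proof.
have [_ [_ [_ [_ [argmaxE _]]]]] := admissible_S.
by rewrite -(@objective_covariates_at coef_one) // argmaxE.
Qed.

Lemma demand_maximizes u :
  Bbar S (demand u) /\ forall y, Bbar S y ->
  ((dotv y u)%:E + Dbar S y <= (dotv (demand u) u)%:E + Dbar S (demand u))%E.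
Proof.
suff : argmax_on (Bbar S) (fun y => ((dotv y u)%:E + Dbar S y)%E) (demand u) by [].
by rewrite argmax_demand.
Qed.

Lemma Dbar_demand_fin_num u : Dbar S (demand u) \is a fin_num.
Proof.
have [_ demand_max] := demand_maximizes u.
have [_ [_ [_ [_ [_ [_ [_ [_ [Dbar_neq_pinfty [_ [_ [[y [By Dy]] _]]]]]]]]]]]] :=
  admissible_S.
rewrite fin_numE Dbar_neq_pinfty andbT; apply/eqP => Dbar_ninfty.
by have := demand_max _ By; rewrite Dbar_ninfty addeNy leeNy_eq -(fineK Dy) -EFinD.
Qed.

Lemma Vfun_value u : Vfun S u = (value u)%:E.
Proof.
have [B_demand demand_max] := demand_maximizes u.
rewrite /value EFinD fineK ?Dbar_demand_fin_num //.
apply/eqP; rewrite eq_le; apply/andP; split.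
- by apply: ge_ereal_sup => _ [y By <-]; exact: demand_max.
- by apply: ereal_sup_ubound; exists (demand u).
Qed.

Lemma value_subgradient u u' : value u + dotv (demand u) (u' - u) <= value u'.
Proof.
have [B_demand _] := demand_maximizes u.
have : ((dotv (demand u) u')%:E + Dbar S (demand u) <= Vfun S u')%E.
  by apply: ereal_sup_ubound; exists (demand u).
rewrite Vfun_value -(fineK (Dbar_demand_fin_num u)) -EFinD lee_fin.
by rewrite /value dotvBr; lra.
Qed.

Lemma ASF_covariates_at u : ASF S (covariates_at u) = demand u.
Proof.
have [_ [_ [_ [Ybar_int [argmaxE [_ [_ [_ [_ [_ [_ [_ beta1_ae]]]]]]]]]]]] :=
  admissible_S.
apply/rowP => k; rewrite mxE.
have Ybar_ae : (\int[sp_nu S]_t (Ybar_xb S (covariates_at u) (sp_beta S t) ord0 k)%:E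
               = \int[sp_nu S]_t (cst (demand u ord0 k)%:E t))%E.
  apply: ae_eq_integral => //; first exact: measurable_int (Ybar_int _ k).
  apply: filterS beta1_ae => t beta1 _ /=.
  have := argmaxE (covariates_at u) (sp_beta S t).
  rewrite objective_covariates_at // argmax_demand => argmax_eq.
  have : [set demand u] (Ybar_xb S (covariates_at u) (sp_beta S t)) by rewrite argmax_eq.
  by move=> ->.
by rewrite Ybar_ae integral_cst //= probability_setT mule1.
Qed.

Lemma value_segment_subgradient u w s t :
  dotv (demand (u + t *: w)) w * (s - t) <= value (u + s *: w) - value (u + t *: w).
Proof.
have := value_subgradient (u + t *: w) (u + s *: w).
rewrite (_ : _ - _ = (s - t) *: w); last by rewrite scalerBl opprD addrACA subrr add0r.
by rewrite dotvZr mulrC lerBrDl.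
Qed.

End Demand.

Lemma value_increment_eq (R : realType) K (d : 'I_K -> nat) (lo hi : 'I_K -> \bar R)
    (S1 S2 : @spec R K d) :
  admissible S1 -> admissible S2 ->
  (forall x, in_region lo hi x -> ASF S1 x = ASF S2 x) ->
  forall u u', in_box lo hi u -> in_box lo hi u' ->
  value S1 u' - value S1 u = value S2 u' - value S2 u.
Proof.
move=> adm1 adm2 ASF_eq u u' box_u box_u'.
have demand_eq v : in_box lo hi v -> demand S2 v = demand S1 v.
  move=> box_v; rewrite -(ASF_covariates_at adm1) -(ASF_covariates_at adm2).
  by rewrite ASF_eq //; exact: in_region_covariates_at.
have := common_subgradient_increment_eq
  (phi1 := fun t => value S1 (u + t *: (u' - u)))
  (phi2 := fun t => value S2 (u + t *: (u' - u)))
  (g := fun t => dotv (demand S1 (u + t *: (u' - u))) (u' - u)).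
rewrite /= scale1r scale0r addr0 subrKC; apply.
- by move=> s t _ _; exact: value_segment_subgradient.
- move=> s t _ t01; rewrite -demand_eq; last exact: in_box_segment.
  exact: value_segment_subgradient.
Qed.

Theorem proposition2 (R : realType) (K : nat) (d : 'I_K -> nat)
    (lo hi : 'I_K -> \bar R) (S1 S2 : @spec R K d) :
  (forall k, (lo k <= hi k)%E) ->
  admissible S1 -> admissible S2 ->
  (forall x, in_region lo hi x -> ASF S1 x = ASF S2 x) ->
  (forall u u', in_box lo hi u -> in_box lo hi u' ->
     (Vfun S1 u - Vfun S1 u' = Vfun S2 u - Vfun S2 u')%E) /\
  ((forall k, lo k = -oo%E /\ hi k = +oo%E) ->
     exists c : R, forall u, Vfun S1 u = (Vfun S2 u + c%:E)%E).
Proof.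
move=> _ adm1 adm2 ASF_eq; split.
  move=> u u' box_u box_u'; rewrite !Vfun_value // -!EFinB.
  by rewrite (value_increment_eq adm1 adm2 ASF_eq box_u' box_u).
move=> unbounded.
have box_all v : in_box lo hi v.
  by move=> k; have [-> ->] := unbounded k; rewrite leNye leey.
exists (value S1 0 - value S2 0) => u.
rewrite !Vfun_value // -EFinD; congr EFin.
have := value_increment_eq adm1 adm2 ASF_eq (box_all 0) (box_all u); lra.
Qed.
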